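(* Let $d\le\ell$ be positive integers and $L\ge2$. For any $(p,n,d)$-non-backtracking multi-labelling of an $L$-graph in which every $p$-vertex carries $d$ $p$-labels, with $\tilde r$ distinct $n$-labels and $\tilde c$ distinct $p$-labels, $$\tilde r+\frac{\tilde c}{\ell}\le\frac L2+\frac{dL}{2\ell}.$$
   Context: An $L$-graph is a cycle with $2L$ vertices alternating between $n$-vertices and $p$-vertices. A $(p,n,d)$-non-backtracking multi-labelling assigns an $n$-label in $[n]$ to each $n$-vertex and a tuple of $d$ $p$-labels in $[p]$ to each $p$-vertex, with $d\le\ell$, such that: (i) the $n$-label of each $n$-vertex differs from those of the $n$-vertices immediately preceding and following it, and the tuple of each $p$-vertex differs (as a set, i.e. up to reordering) from those of the $p$-vertices immediately preceding and following it; (ii) for each $n$-label $i$ and $p$-label $j$ there is an even number of edges whose $n$-endpoint is labelled $i$ and whose $p$-endpoint's tuple contains $j$. *)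

From mathcomp Require Import all_boot all_order all_algebra.
Set Implicit Arguments. Unset Strict Implicit. Unset Printing Implicit Defensive.

(* An L-graph: cycle n_0, p_0, n_1, p_1, ..., n_{L-1}, p_{L-1}, (back to n_0).
   n-vertices and p-vertices are both indexed by 'I_L.  Edges:
   (n_k, p_k) and (n_{k+1 mod L}, p_k) for k : 'I_L  (2L edges). *)

Definition cnext (L : nat) (k : 'I_L) : 'I_L := ordS k.

Definition plabels (p d L : nat) (pl : 'I_L -> d.-tuple 'I_p) (k : 'I_L)
  : {set 'I_p} := [set j | j \in tval (pl k)].

Definition edge_count (n p d L : nat) (nl : 'I_L -> 'I_n)
  (pl : 'I_L -> d.-tuple 'I_p) (i : 'I_n) (j : 'I_p) : nat :=
  #|[set k : 'I_L | (nl k == i) && (j \in tval (pl k))]|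
  + #|[set k : 'I_L | (nl (cnext k) == i) && (j \in tval (pl k))]|.

Definition non_backtracking_multilabelling (n p d L : nat)
  (nl : 'I_L -> 'I_n) (pl : 'I_L -> d.-tuple 'I_p) : Prop :=
  (forall k : 'I_L, nl k != nl (cnext k)) /\
  (forall k : 'I_L, plabels pl k != plabels pl (cnext k)) /\
  (forall (i : 'I_n) (j : 'I_p), ~~ odd (edge_count nl pl i j)).

Definition num_nlabels (n L : nat) (nl : 'I_L -> 'I_n) : nat :=
  #|[set nl k | k : 'I_L]|.

Definition num_plabels (p d L : nat) (pl : 'I_L -> d.-tuple 'I_p) : nat :=
  #|\bigcup_(k : 'I_L) plabels pl k|.

(* Every label occurs at least twice.  If an n-label occurred only at n_k,
   its edges would be (n_k, p_(k-1)) and (n_k, p_k); since the label sets of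
   p_(k-1) and p_k differ, some p-label would lie on exactly one of these edges,
   against the parity condition.  If a p-label occurred only at p_k, its edges
   would be (n_k, p_k) and (n_(k+1), p_k), and n_k, n_(k+1) carry different
   labels.  Double counting then gives 2 r <= L and 2 c <= d L. *)

From mathcomp Require Import all_boot all_order all_algebra.
Import GRing.Theory Num.Theory.

Set Implicit Arguments.
Unset Strict Implicit.
Unset Printing Implicit Defensive.

Lemma cards_eq_and (T : finType) (k0 : T) (b : pred T) :
  #|[set k | (k == k0) && b k]| = b k0.
Proof. by rewrite -sum1dep_card big_mkcondr big_pred1_eq; case: (b k0). Qed.

Lemma sum_cards_exchange (I T : finType) (A : I -> {set T}) :
  \sum_i #|A i| = \sum_x #|[set i | x \in A i]|.
Proof.
under eq_bigr do rewrite -sum1_card big_mkcond.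
rewrite exchange_big; apply: eq_bigr => x _.
by rewrite -sum1dep_card [RHS]big_mkcond.
Qed.

Lemma double_card_bigcup_le (I T : finType) (A : I -> {set T}) :
  {in \bigcup_i A i, forall x, 1 < #|[set i | x \in A i]|} ->
  2 * #|\bigcup_i A i| <= \sum_i #|A i|.
Proof.
move=> repeated; rewrite sum_cards_exchange (bigID (mem (\bigcup_i A i))) /=.
rewrite -sum1_card big_distrr /=; apply: leq_trans (leq_addr _ _).
by apply: leq_sum => x /repeated; rewrite muln1.
Qed.

Section NonBacktracking.

Variables (n p d L : nat) (nl : 'I_L -> 'I_n) (pl : 'I_L -> d.-tuple 'I_p).
Hypothesis nl_step : forall k, nl k != nl (cnext k).
Hypothesis pl_step : forall k, plabels pl k != plabels pl (cnext k).
Hypothesis even_edges : forall i j, ~~ odd (edge_count nl pl i j).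

Lemma edge_count_unique_nlabel k0 j :
  (forall k, (nl k == nl k0) = (k == k0)) ->
  edge_count nl pl (nl k0) j = (j \in pl k0) + (j \in pl (ord_pred k0)).
Proof.
move=> nl_unique; rewrite /edge_count /cnext.
under eq_finset do rewrite nl_unique.
under [in X in _ + X]eq_finset
  do rewrite nl_unique -[k0 in _ == k0]ord_predK (inj_eq (@ordS_inj _)).
by rewrite !cards_eq_and.
Qed.

Lemma edge_count_unique_plabel k0 j :
  (forall k, (j \in pl k) = (k == k0)) ->
  edge_count nl pl (nl k0) j = 1.
Proof.
move=> pl_unique; rewrite /edge_count.
under eq_finset do rewrite pl_unique andbC.
under [in X in _ + X]eq_finset do rewrite pl_unique andbC.
by rewrite !cards_eq_and eqxx eq_sym (negbTE (nl_step k0)).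
Qed.

Lemma nlabel_repeats k0 : 1 < #|[set k | nl k == nl k0]|.
Proof.
apply/card_gt1P; exists k0; rewrite inE eqxx.
case: (pickP (fun k => (k != k0) && (nl k == nl k0))) => [k|none].
  by case/andP=> kDk0 nlk; exists k; rewrite inE nlk eq_sym.
have nl_unique k : (nl k == nl k0) = (k == k0).
  by have := none k; case: eqP => [->|_ /= ->]; rewrite ?eqxx.
have /existsP[j jD] :
    [exists j, (j \in plabels pl k0) != (j \in plabels pl (ord_pred k0))].
  apply: contraTT (pl_step (ord_pred k0)) => /existsPn same.
  by rewrite /cnext ord_predK negbK; apply/eqP/setP => j; apply/esym/eqP/negPn.
rewrite /plabels !inE in jD.
have := even_edges (nl k0) j.
by rewrite edge_count_unique_nlabel // oddD !oddb -negb_eqb jD.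
Qed.

Lemma plabel_repeats k0 j : j \in pl k0 -> 1 < #|[set k | j \in pl k]|.
Proof.
move=> jk0; apply/card_gt1P; exists k0; rewrite inE jk0.
case: (pickP (fun k => (k != k0) && (j \in pl k))) => [k /andP[kDk0 jk]|none].
  by exists k; rewrite inE jk eq_sym.
have pl_unique k : (j \in pl k) = (k == k0).
  by have := none k; case: eqP => [->|_ /= ->].
by have := even_edges (nl k0) j; rewrite edge_count_unique_plabel.
Qed.

Lemma double_num_nlabels_le : 2 * num_nlabels nl <= L.
Proof.
have -> : num_nlabels nl = #|\bigcup_k [set nl k]|.
  congr #|pred_of_set _|; apply/setP => i.
  apply/imsetP/bigcupP => [[k _ ->]|[k _ /set1P->]]; exists k; rewrite ?inE //.
apply: leq_trans (double_card_bigcup_le _) _.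
  move=> _ /bigcupP[k0 _ /set1P->].
  by under eq_finset do rewrite inE eq_sym; apply: nlabel_repeats.
by under eq_bigr do rewrite cards1; rewrite sum1_card card_ord.
Qed.

Lemma double_num_plabels_le : 2 * num_plabels pl <= d * L.
Proof.
apply: leq_trans (double_card_bigcup_le _) _.
  move=> j /bigcupP[k0 _]; rewrite inE => jk0.
  by under eq_finset do rewrite inE; apply: plabel_repeats jk0.
rewrite -[L in d * L]card_ord -sum1_card big_distrr /=; apply: leq_sum => k _.
by rewrite muln1 cardsE (leq_trans (card_size _)) ?size_tuple.
Qed.

End NonBacktracking.

Local Open Scope ring_scope.

Theorem lemma5p4 (n p d l L : nat) (nl : 'I_L -> 'I_n)
  (pl : 'I_L -> d.-tuple 'I_p) :
  (0 < d)%N -> (d <= l)%N -> (2 <= L)%N ->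
  non_backtracking_multilabelling nl pl ->
  ((num_nlabels nl)%:R + (num_plabels pl)%:R / l%:R
   <= L%:R / 2 + (d * L)%:R / (2 * l)%:R :> rat).
Proof.
(* The bound holds termwise; for [l = 0] both quotients are [0]. *)
move=> _ _ _ [nl_step [pl_step even_edges]].
have r_le := double_num_nlabels_le pl_step even_edges.
have c_le := double_num_plabels_le nl_step even_edges.
apply: lerD; first by rewrite ler_pdivlMr // -natrM ler_nat mulnC.
rewrite [(2 * l)%:R]natrM invfM mulrA ler_wpM2r ?invr_ge0 //.
by rewrite ler_pdivlMr // -natrM ler_nat mulnC.
Qed.
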